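(* Let $S$ be a left amenable group, written additively, and let $X=Z^{*}$ be a dual Banach space. Let $W_{wbc}(X)$ be the family of all nonempty weak$^{*}$-closed, bounded, convex subsets of $X$, and let $F:S\to W_{wbc}(X)$ be a multi-valued map. Then $F$ admits an additive selection, i.e. a map $g:S\to X$ with $g(s+t)=g(s)+g(t)$ for all $s,t\in S$ and $g(s)\in F(s)$ for all $s\in S$, if and only if there exists a function $f:S\to X$ such that $f(s+t)-f(t)\in F(s)$ for all $s,t\in S$.
   Context: $S$ is left amenable if there is a norm-one linear functional $m$ on $\ell_\infty(S)$ with $m(e)=1$ ($e$ the constant function $1$) and $m(f)=m(f_s)$ for all $f\in\ell_\infty(S)$ and $s\in S$, where $f_s(t)=f(s+t)$. *)

From HB Require Import structures.
From mathcomp Require Import all_boot all_order all_algebra.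
From mathcomp Require Import all_classical all_reals all_analysis.
Set Implicit Arguments. Unset Strict Implicit. Unset Printing Implicit Defensive.
Import Order.TTheory GRing.Theory Num.Theory.
Import numFieldNormedType.Exports.
Local Open Scope classical_set_scope.
Local Open Scope ring_scope.

Definition is_group (S : Type) (add : S -> S -> S) (zero : S) (opp : S -> S) :=
  [/\ forall a b c, add a (add b c) = add (add a b) c,
      forall a, add zero a = a /\ add a zero = a
    & forall a, add (opp a) a = zero /\ add a (opp a) = zero].

Definition bounded_fun (R : realType) (S : Type) (f : S -> R) :=
  exists M : R, forall t, `|f t| <= M.

(* Norm <= 1 is written out as
   |m f| <= M whenever |f t| <= M for all t; together with m(e)=1 the norm
   is exactly one. *)
Definition left_amenable (R : realType) (S : Type) (add : S -> S -> S) :=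
  exists m : (S -> R) -> R,
    [/\ forall (a : R) (f g : S -> R), bounded_fun f -> bounded_fun g ->
          m (fun t => a * f t + g t) = a * m f + m g,
        forall (f : S -> R) (M : R), (forall t, `|f t| <= M) -> `|m f| <= M,
        m (fun _ => 1) = 1
      & forall (f : S -> R) (s : S), bounded_fun f ->
          m f = m (fun t => f (add s t))].

Definition dual_elt (R : realType) (Z : normedModType R) (phi : Z -> R) :=
  (forall (a : R) (x y : Z), phi (a *: x + y) = a * phi x + phi y)
  /\ continuous phi.

(* weak*-closed: the complement (in X) is open for the weak* topology, i.e.
   every phi in X \ A has a basic weak*-neighbourhood disjoint from A. *)
Definition weak_star_closed (R : realType) (Z : normedModType R)
    (A : set (Z -> R)) :=
  forall phi, dual_elt phi -> ~ A phi ->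
    exists (zs : seq Z) (e : R), 0 < e /\
      forall psi, dual_elt psi ->
        (forall z, z \in zs -> `|psi z - phi z| < e) -> ~ A psi.

Definition dual_bounded (R : realType) (Z : normedModType R)
    (A : set (Z -> R)) :=
  exists M : R, forall phi, A phi -> forall z, `|phi z| <= M * `|z|.

Definition dual_convex (R : realType) (Z : normedModType R)
    (A : set (Z -> R)) :=
  forall phi psi (a : R), A phi -> A psi -> 0 <= a -> a <= 1 ->
    A (fun z => a * phi z + (1 - a) * psi z).

Definition W_wbc (R : realType) (Z : normedModType R) (A : set (Z -> R)) :=
  [/\ A `<=` (@dual_elt R Z), A !=set0, weak_star_closed A,
      dual_bounded A & dual_convex A].

From Pilot Require Import Defs.
From mathcomp Require Import all_boot all_order all_algebra.
From mathcomp Require Import all_classical all_reals all_analysis.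
From mathcomp Require Import ring lra.
Set Implicit Arguments. Unset Strict Implicit. Unset Printing Implicit Defensive.
Import Order.TTheory GRing.Theory Num.Theory.
Import numFieldNormedType.Exports.
Local Open Scope classical_set_scope.
Local Open Scope ring_scope.

(* With m an invariant mean on S, the selection is g(s) := m_t (f(s+t) - f(t)),
   taken coordinatewise on Z. Invariance of m turns the cocycle identity of the
   differences into additivity of g, and the uniform bound on F(s) makes g(s) a
   bounded functional. It lies in F(s) because the mean p of a bounded family h
   in a convex set K lies in the weak*-closure of K: fix finitely many
   coordinates, and suppose every x in K is at squared distance at least e^2
   from p there. The mean of t |-> <h(t) - x, p - x> is |p - x|^2, so some h(t)
   nearly attains it, and a short step from x towards h(t), which stays in K,
   lowers the squared distance by a fixed amount; this cannot go on forever. *)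

(* MathComp-Analysis also has a notation [bounded_fun], which would hide the one of [Defs]. *)
Local Notation bounded_fun := Defs.bounded_fun.

Lemma no_uniform_descent (R : archiRealFieldType) (T : Type) (P : T -> Prop)
    (Q : T -> R) (c : R) (x0 : T) :
  0 < c -> P x0 -> (forall x, P x -> 0 <= Q x) ->
  ~ (forall x, P x -> exists2 y, P y & Q y <= Q x - c).
Proof.
move=> c_gt0 Px0 Q_ge0 descent.
have iter n : exists2 x, P x & Q x <= Q x0 - n%:R * c.
  elim: n => [|n [x Px Qx]]; first by exists x0; rewrite ?mul0r ?subr0.
  have [y Py Qy] := descent x Px; exists y => //.
  by rewrite -addn1 natrD mulrDl mul1r; lra.
have := archi_boundP (divr_ge0 (Q_ge0 x0 Px0) (ltW c_gt0)).
rewrite ltr_pdivrMr // => big_n.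
have [x Px Qx] := iter (Num.Def.archi_bound (Q x0 / c)).
by have := Q_ge0 x Px; lra.
Qed.

Section SquaredDistance.
Variables (R : realFieldType) (Z : eqType) (zs : seq Z).

Definition sqdist (x y : Z -> R) := \sum_(z <- zs) (x z - y z) ^+ 2.

Lemma sqdist_ge0 x y : 0 <= sqdist x y.
Proof. by apply: sumr_ge0 => z _; exact: sqr_ge0. Qed.

Lemma sqdist_ge_coord x y z : z \in zs -> (x z - y z) ^+ 2 <= sqdist x y.
Proof.
move=> zs_z; rewrite /sqdist (big_rem z) //= lerDl.
by apply: sumr_ge0 => w _; exact: sqr_ge0.
Qed.

Lemma sqdist_lerp x y p (l : R) :
  sqdist (fun z => l * y z + (1 - l) * x z) p =
  sqdist x p - 2 * l * \sum_(z <- zs) (y z - x z) * (p z - x z)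
  + l ^+ 2 * sqdist y x.
Proof.
rewrite /sqdist mulr_sumr mulr_sumr -sumrN -!big_split /=.
by apply: eq_bigr => z _; ring.
Qed.

End SquaredDistance.

Lemma bounded_linear_dual_elt (R : realType) (Z : normedModType R)
    (phi : Z -> R) (M : R) :
  (forall (a : R) (x y : Z), phi (a *: x + y) = a * phi x + phi y) ->
  (forall z, `|phi z| <= M * `|z|) -> dual_elt phi.
Proof.
move=> phi_lin phi_bd; split=> // x.
have M1_gt0 : 0 < `|M| + 1 by have := normr_ge0 M; lra.
have phiB y : phi x - phi y = phi (x - y).
  by rewrite [x - y]addrC -[- y]scaleN1r phi_lin mulN1r addrC.
apply/cvgrPdist_lt => e e_gt0; near=> y.
rewrite phiB (le_lt_trans (phi_bd _)) //.
apply: (@le_lt_trans _ _ ((`|M| + 1) * `|x - y|)).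
  by rewrite ler_wpM2r // (le_trans (ler_norm M)) // lerDl.
rewrite mulrC -ltr_pdivlMr //; near: y.
by apply: cvgr_dist_lt; [exact: cvg_id | exact: divr_gt0].
Unshelve. all: by end_near.
Qed.

Section BoundedFun.
Variables (R : realType) (S : Type).

Lemma bounded_cst (c : R) : bounded_fun (fun _ : S => c).
Proof. by exists `|c|. Qed.

Lemma boundedD (f g : S -> R) : bounded_fun f -> bounded_fun g ->
  bounded_fun (fun t => f t + g t).
Proof.
move=> [M fM] [N gN]; exists (M + N) => t.
exact: le_trans (ler_normD _ _) (lerD (fM t) (gN t)).
Qed.

Lemma boundedZ (a : R) (f : S -> R) :
  bounded_fun f -> bounded_fun (fun t => a * f t).
Proof. by move=> [M fM]; exists (`|a| * M) => t; rewrite normrM ler_wpM2l. Qed.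

Lemma bounded_comp (T : Type) (u : T -> S) (f : S -> R) :
  bounded_fun f -> bounded_fun (fun t => f (u t)).
Proof. by move=> [M fM]; exists M. Qed.

Lemma bounded_sum (I : Type) (r : seq I) (G : I -> S -> R) :
  (forall i, bounded_fun (G i)) ->
  bounded_fun (fun t => \sum_(i <- r) G i t).
Proof.
move=> G_bd; elim: r => [|i r IHr].
  by under eq_fun do rewrite big_nil; exact: bounded_cst.
by under eq_fun do rewrite big_cons; exact: boundedD.
Qed.

End BoundedFun.

Section Mean.
Variables (R : realType) (S : Type) (m : (S -> R) -> R).
Hypothesis meanL : forall (a : R) (f g : S -> R),
  bounded_fun f -> bounded_fun g -> m (fun t => a * f t + g t) = a * m f + m g.
Hypothesis mean_norm : forall (f : S -> R) (M : R),
  (forall t, `|f t| <= M) -> `|m f| <= M.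
Hypothesis mean1 : m (fun _ => 1) = 1.

Lemma mean0 : m (fun _ => 0) = 0.
Proof. by apply/eqP; rewrite -normr_le0; apply: mean_norm => t; rewrite normr0. Qed.

Lemma meanD (f g : S -> R) : bounded_fun f -> bounded_fun g ->
  m (fun t => f t + g t) = m f + m g.
Proof.
move=> f_bd g_bd; rewrite -[m f]mul1r -meanL //.
by under [in RHS]eq_fun do rewrite mul1r.
Qed.

Lemma meanZ (a : R) (f : S -> R) : bounded_fun f ->
  m (fun t => a * f t) = a * m f.
Proof.
move=> f_bd; rewrite -[RHS]addr0 -mean0 -meanL //; last exact: bounded_cst.
by under [in RHS]eq_fun do rewrite addr0.
Qed.

Lemma mean_cst (c : R) : m (fun _ => c) = c.
Proof.
rewrite -[RHS]mulr1 -mean1 -meanZ; last exact: bounded_cst.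
by under [in RHS]eq_fun do rewrite mulr1.
Qed.

Lemma mean_sum (I : Type) (r : seq I) (G : I -> S -> R) :
  (forall i, bounded_fun (G i)) ->
  m (fun t => \sum_(i <- r) G i t) = \sum_(i <- r) m (G i).
Proof.
move=> G_bd; elim: r => [|i r IHr].
  by under eq_fun do rewrite big_nil; rewrite big_nil mean0.
under eq_fun do rewrite big_cons.
by rewrite big_cons meanD ?IHr //; exact: bounded_sum.
Qed.

(* Centring [f] in [-B, a] at [c] lets the norm bound [`|m (f - c)| <= (a + B) / 2] act as an upper bound. *)
Lemma mean_le (f : S -> R) (a : R) : bounded_fun f ->
  (forall t, f t <= a) -> m f <= a.
Proof.
move=> [B fB] f_le; pose c := (a - B) / 2.
have : `|m (fun t => f t + - c)| <= (a + B) / 2.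
  apply: mean_norm => t; have := fB t; have := f_le t.
  by rewrite !ler_norml /c => ? /andP[? ?]; apply/andP; split; lra.
rewrite meanD ?mean_cst; [|by exists B|exact: bounded_cst].
by rewrite ler_norml /c => /andP[_ ?]; lra.
Qed.

Lemma lt_mean_exists (f : S -> R) (a : R) : bounded_fun f ->
  a < m f -> exists t, a < f t.
Proof.
move=> f_bd a_lt; apply: contrapT => no_t.
suff : m f <= a by rewrite leNgt a_lt.
by apply: mean_le => // t; rewrite leNgt; apply/negP => ?; apply: no_t; exists t.
Qed.

Section MeanInWeakClosure.
Variables (Z : eqType) (K : set (Z -> R)) (B : Z -> R) (h : S -> Z -> R).
Hypothesis K_convex : forall phi psi (a : R), K phi -> K psi -> 0 <= a -> a <= 1 ->
  K (fun z => a * phi z + (1 - a) * psi z).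
Hypothesis K_bounded : forall x, K x -> forall z, `|x z| <= B z.
Hypothesis hK : forall t, K (h t).
Variable zs : seq Z.

Let p z := m (fun t => h t z).
Let cross x t := \sum_(z <- zs) (h t z - x z) * (p z - x z).

Lemma bounded_coord z : bounded_fun (fun t => h t z).
Proof. by exists (B z) => t; exact: K_bounded. Qed.

Lemma cross_termE x z :
  (fun t => (h t z - x z) * (p z - x z)) =
  (fun t => (p z - x z) * h t z + - x z * (p z - x z)).
Proof. by apply/funext => t; ring. Qed.

Lemma bounded_cross_term x z :
  bounded_fun (fun t => (h t z - x z) * (p z - x z)).
Proof.
rewrite cross_termE; apply: boundedD; last exact: bounded_cst.
by apply: boundedZ; exact: bounded_coord.
Qed.

Lemma bounded_cross x : bounded_fun (cross x).
Proof. exact: bounded_sum (bounded_cross_term x). Qed.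

Lemma mean_cross x : m (cross x) = sqdist zs x p.
Proof.
rewrite /cross mean_sum; last exact: bounded_cross_term.
apply: eq_bigr => z _; rewrite cross_termE meanL ?mean_cst /p;
  [ring | exact: bounded_coord | exact: bounded_cst].
Qed.

Let diam := \sum_(z <- zs) (2 * B z) ^+ 2.

Lemma sqdist_le_diam x y : K x -> K y -> sqdist zs y x <= diam.
Proof.
move=> Kx Ky; apply: ler_sum => z _.
have := K_bounded Kx z; have := K_bounded Ky z; rewrite !ler_norml.
by move=> /andP[? ?] /andP[? ?]; nra.
Qed.

(* Step from [x] towards a point [h t] at which [cross x] almost reaches its mean [sqdist zs x p]. *)
Lemma descent_step e : 0 < e -> (forall x, K x -> e ^+ 2 <= sqdist zs x p) ->
  exists2 c, 0 < c &
    forall x, K x -> exists2 x', K x' & sqdist zs x' p <= sqdist zs x p - c.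
Proof.
(* The step length [l] keeps [l * diam <= e ^+ 2 / 2], which leaves a gain of [l * e ^+ 2 / 2]. *)
move=> e_gt0 far; pose l := e ^+ 2 / (2 * (diam + e ^+ 2)).
have diam_ge0 : 0 <= diam by apply: sumr_ge0 => z _; exact: sqr_ge0.
have e2_gt0 : 0 < e ^+ 2 by rewrite exprn_gt0.
have lE : 2 * l * diam + 2 * l * e ^+ 2 = e ^+ 2 by rewrite /l; field; lra.
have l_gt0 : 0 < l by rewrite /l divr_gt0 //; lra.
have l_le1 : l <= 1 by nra.
exists (l * e ^+ 2 / 2); first by rewrite divr_gt0 // mulr_gt0.
move=> x Kx.
have [t cross_t] : exists t, sqdist zs x p - e ^+ 2 / 2 < cross x t.
  by apply: lt_mean_exists; [exact: bounded_cross | rewrite mean_cross; lra].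
exists (fun z => l * h t z + (1 - l) * x z); first by apply: K_convex => //; exact: ltW.
rewrite sqdist_lerp; move: cross_t (far x Kx) (sqdist_le_diam Kx (hK t)).
rewrite /cross; set Q := sqdist zs x p; set Y := sqdist zs (h t) x.
set w := \sum_(z <- zs) _ => w_gt Q_ge Y_le.
have lw_ge : l * (Q - e ^+ 2 / 2) <= l * w by apply: ler_wpM2l; rewrite ?ltW.
have lY_le : l ^+ 2 * Y <= l ^+ 2 * diam by apply: ler_wpM2l; rewrite ?sqr_ge0.
have lQ_ge : l * e ^+ 2 <= l * Q by apply: ler_wpM2l => //; exact: ltW.
have ldiam_le : l * (l * diam) <= l * (e ^+ 2 / 2).
  by apply: ler_wpM2l; rewrite ?ltW //; nra.
lra.
Qed.

Lemma mean_approx x0 e : K x0 -> 0 < e ->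
  exists psi, K psi /\ forall z, z \in zs -> `|psi z - p z| < e.
Proof.
move=> Kx0 e_gt0; apply: contrapT => far.
have far2 x : K x -> e ^+ 2 <= sqdist zs x p.
  move=> Kx; have : ~ forall z, z \in zs -> `|x z - p z| < e.
    by move=> close; apply: far; exists x.
  move=> /existsNP[z /not_implyP[zs_z /negP]]; rewrite -leNgt => e_le.
  apply: le_trans (sqdist_ge_coord _ _ zs_z).
  by rewrite -[(x z - p z) ^+ 2]real_normK ?num_real // ler_sqr ?nnegrE // ltW.
have [c c_gt0 descent] := descent_step e_gt0 far2.
exact: no_uniform_descent c_gt0 Kx0 (fun x _ => sqdist_ge0 zs x p) descent.
Qed.

End MeanInWeakClosure.

Section Selection.
Variables (add : S -> S -> S) (Z : normedModType R).
Variables (F : S -> set (Z -> R)) (f : S -> Z -> R).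
Hypothesis addA : forall a b c, add a (add b c) = add (add a b) c.
Hypothesis mean_inv : forall (u : S -> R) (s : S),
  bounded_fun u -> m u = m (fun t => u (add s t)).
Hypothesis F_wbc : forall s, W_wbc (F s).
Hypothesis f_dual : forall s, dual_elt (f s).
Hypothesis f_diff : forall s t, F s (fun z => f (add s t) z - f t z).

Let g s z := m (fun t => f (add s t) z - f t z).

Lemma bounded_diff s z : bounded_fun (fun t => f (add s t) z - f t z).
Proof.
have [_ _ _ [M FM] _] := F_wbc s.
by exists (M * `|z|) => t; exact: FM _ (f_diff s t) z.
Qed.

Lemma dual_elt_g s : dual_elt (g s).
Proof.
have [_ _ _ [M FM] _] := F_wbc s.
apply: (@bounded_linear_dual_elt _ _ _ M) => [a x y | z].
  rewrite /g -meanL; try exact: bounded_diff.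
  congr m; apply/funext => t.
  by case: (f_dual (add s t)) => -> _; case: (f_dual t) => -> _; ring.
by apply: mean_norm => t; exact: FM _ (f_diff s t) z.
Qed.

(* Split f(s+s'+t) - f(t) at f(s'+t) and use invariance of [m] under [t |-> s' + t]. *)
Lemma g_additive s s' z : g (add s s') z = g s z + g s' z.
Proof.
rewrite /g (mean_inv s' (bounded_diff s z)) -meanD;
  [|exact: bounded_comp (bounded_diff s z) | exact: bounded_diff].
by congr m; apply/funext => t; rewrite addA addrA subrK.
Qed.

Lemma g_in_F s : F s (g s).
Proof.
have [F_dual [x0 Fx0] F_closed [M FM] F_convex] := F_wbc s.
apply: contrapT => notF.
have [zs [e [e_gt0 avoid]]] := F_closed _ (dual_elt_g s) notF.
have [psi [Fpsi close]] := mean_approx F_convex FM (f_diff s) zs Fx0 e_gt0.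
exact: avoid psi (F_dual _ Fpsi) close Fpsi.
Qed.

Lemma mean_selection : exists g : S -> Z -> R,
  [/\ forall s, dual_elt (g s),
      forall s t z, g (add s t) z = g s z + g t z
    & forall s, F s (g s)].
Proof. by exists g; split; [exact: dual_elt_g | exact: g_additive | exact: g_in_F]. Qed.

End Selection.

End Mean.

Theorem theorem11 (R : realType) (S : Type) (add : S -> S -> S) (zero : S)
    (opp : S -> S) (Z : completeNormedModType R) (F : S -> set (Z -> R)) :
  is_group add zero opp ->
  left_amenable R add ->
  (forall s, W_wbc (F s)) ->
  (exists g : S -> Z -> R,
      [/\ forall s, dual_elt (g s),
          forall s t z, g (add s t) z = g s z + g t z
        & forall s, F s (g s)])
  <->
  (exists f : S -> Z -> R,
      (forall s, dual_elt (f s)) /\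
      forall s t, F s (fun z => f (add s t) z - f t z)).
Proof.
move=> [addA _ _] [m [meanL mean_norm mean1 mean_inv]] F_wbc; split.
  move=> [g [g_dual g_add g_F]]; exists g; split => // s t.
  suff -> : (fun z => g (add s t) z - g t z) = g s by [].
  by apply/funext => z; rewrite g_add addrK.
move=> [f [f_dual f_diff]].
exact (mean_selection meanL mean_norm mean1 addA mean_inv F_wbc f_dual f_diff).
Qed.
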